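(* Fix $c\in\mathbb{C}$, let $f_c(z)=z^2+c$, and for $q\in(0,1]$ let $z_q(0)=0$ and $$z_q(n)=\frac{1}{\Gamma(q)}\sum_{i=1}^{n}\frac{\Gamma(n-i+q)}{\Gamma(n-i+1)}\,f_c\big(z_q(i-1)\big),\qquad n\ge1.$$ As $q\uparrow 1$ this fractional-order Mandelbrot map becomes $z(n)=\sum_{i=1}^{n}f_c(z(i-1))$, $z(0)=0$. The set of parameters $c\in\mathbb{C}$ for which this sequence $(z(n))_{n\ge0}$ is bounded differs from the classical Mandelbrot set $\{c\in\mathbb{C}:(f_c^{\,n}(0))_{n\ge1}\text{ bounded}\}$.
   Context: The recursion is the numerical solution of the Caputo-like fractional difference initial value problem $\Delta^q z(t)=f_c(z(t+q-1))$, $t\in\mathbb{N}_{1-q}$, $z(0)=0$, of order $q$; the set of $c$ for which it stays bounded is the fractional-order Mandelbrot set. $\Gamma$ is Euler's Gamma function. *)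

From HB Require Import structures.
From mathcomp Require Import all_boot all_order all_algebra.
From mathcomp Require Import complex.
From mathcomp Require Import reals.
Set Implicit Arguments. Unset Strict Implicit. Unset Printing Implicit Defensive.
Import Order.TTheory GRing.Theory Num.Theory.
Local Open Scope ring_scope.
Local Open Scope complex_scope.

Definition fc (R : realType) (c z : R[i]) : R[i] := z ^+ 2 + c.

(* history [:: z(0); ...; z(n)] of the q = 1 limit map
   z(0) = 0,  z(n) = \sum_{i=1}^{n} f_c(z(i-1)). *)
Fixpoint zhist (R : realType) (c : R[i]) (n : nat) : seq R[i] :=
  match n with
  | 0 => [:: 0]
  | m.+1 => let h := zhist c m in
            rcons h (\sum_(1 <= i < m.+2) fc c (nth 0 h i.-1))
  end.

Definition z1 (R : realType) (c : R[i]) (n : nat) : R[i] := nth 0 (zhist c n) n.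

Definition fc_iter (R : realType) (c : R[i]) (n : nat) : R[i] := iter n (fc c) 0.

Definition bounded_seq (R : realType) (u : nat -> R[i]) : Prop :=
  exists M : R, forall n, `|u n| <= M%:C.

Definition frac1_set (R : realType) : R[i] -> Prop :=
  fun c => bounded_seq (z1 c).

Definition mandelbrot (R : realType) : R[i] -> Prop :=
  fun c => bounded_seq (fun n => fc_iter c n.+1).

(* Differencing the defining sums shows that the q = 1 map is the iteration
   z |-> z + f_c(z) started at 0.  At c = 1/4 both orbits are real: the
   classical orbit of 0 under x^2 + 1/4 stays in [0, 1/2], so 1/4 lies in the
   Mandelbrot set, whereas each step of x |-> x + x^2 + 1/4 adds at least 1/4,
   so z(n) >= n/4 is unbounded. *)
From mathcomp Require Import all_boot all_order all_algebra complex reals.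
From mathcomp Require Import lra.
Set Implicit Arguments. Unset Strict Implicit. Unset Printing Implicit Defensive.
Import Order.TTheory GRing.Theory Num.Theory.
Local Open Scope ring_scope.
Local Open Scope complex_scope.

Section LimitMap.
Variable R : realType.
Implicit Types (c : R[i]) (r x : R).

Lemma size_zhist c n : size (zhist c n) = n.+1.
Proof. by elim: n => [|n IHn] //=; rewrite size_rcons IHn. Qed.

Lemma nth_zhist c n i : (i <= n)%N -> nth 0 (zhist c n) i = z1 c i.
Proof.
elim: n => [|n IHn]; first by rewrite leqn0 => /eqP ->.
rewrite leq_eqVlt => /orP[/eqP -> // | lt_in].
by rewrite /= nth_rcons size_zhist lt_in IHn.
Qed.

Lemma z1S_sum c n : z1 c n.+1 = \sum_(1 <= i < n.+2) fc c (z1 c i.-1).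
Proof.
rewrite /z1 /= nth_rcons size_zhist ltnn eqxx.
apply: eq_big_nat => -[|i] // /andP[_ lt_in]; congr fc; exact: nth_zhist.
Qed.

Lemma z1S c n : z1 c n.+1 = z1 c n + fc c (z1 c n).
Proof.
case: n => [|n]; first by rewrite z1S_sum big_nat1 add0r.
by rewrite z1S_sum big_nat_recr //= -z1S_sum.
Qed.

Lemma fc_real r x : fc r%:C x%:C = (x ^+ 2 + r)%:C.
Proof. by rewrite /fc rmorphD rmorphXn. Qed.

Lemma z1_real r n : z1 r%:C n = (iter n (fun x => x + (x ^+ 2 + r)) 0)%:C.
Proof. by elim: n => [|n IHn] //=; rewrite z1S IHn fc_real -rmorphD. Qed.

Lemma fc_iter_real r n : fc_iter r%:C n = (iter n (fun x => x ^+ 2 + r) 0)%:C.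
Proof. by elim: n => [|n IHn] //=; rewrite -/(fc_iter _ n) IHn fc_real. Qed.

Lemma normc_real x : `|x%:C| = `|x|%:C.
Proof. by rewrite normc_def /= expr0n addr0 sqrtr_sqr. Qed.

Lemma bounded_seq_real (v : nat -> R[i]) (u : nat -> R) :
  (forall n, v n = (u n)%:C) ->
  bounded_seq v <-> exists M : R, forall n, `|u n| <= M.
Proof.
by move=> vE; split=> -[M bdd]; exists M => n; have := bdd n;
  rewrite vE normc_real lecR.
Qed.

Lemma iter_add_sqr_ge r n :
  0 <= r -> n%:R * r <= iter n (fun x => x + (x ^+ 2 + r)) 0.
Proof.
move=> r_ge0; elim: n => [|n IHn] /=; first by rewrite mul0r.
by rewrite mulrSr mulrDl mul1r lerD // lerDr sqr_ge0.
Qed.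

Lemma iter_sqr_add_bounded r n :
  0 <= r <= 4^-1 -> 0 <= iter n (fun x => x ^+ 2 + r) 0 <= 2^-1.
Proof.
move=> /andP[r_ge0 r_le]; elim: n => [|n IHn] /=.
  by rewrite lexx invr_ge0 ler0n.
move: IHn; set x := iter n _ _ => /andP[x_ge0 x_le].
rewrite expr2; apply/andP; split; nra.
Qed.

Lemma z1_unbounded r : 0 < r -> ~ frac1_set r%:C.
Proof.
move=> r_gt0 /(bounded_seq_real (z1_real r)) [M bdd].
set n := (Num.truncn (M / r)).+1.
have /le_trans/(_ (le_trans (ler_norm _) (bdd n))) := iter_add_sqr_ge n (ltW r_gt0).
by rewrite -ler_pdivlMr // leNgt truncnS_gt.
Qed.

Lemma mandelbrot_real r : 0 <= r <= 4^-1 -> mandelbrot r%:C.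
Proof.
move=> r_bnd; apply/(bounded_seq_real (fun n => fc_iter_real r n.+1)).
exists 2^-1 => n.
by have /andP[x_ge0 x_le] := iter_sqr_add_bounded n.+1 r_bnd; rewrite ger0_norm.
Qed.

End LimitMap.

Theorem proposition3 (R : realType) : frac1_set (R:=R) <> mandelbrot (R:=R).
Proof.
move=> eq_sets; have quarter_gt0 : 0 < 4^-1 :> R by rewrite invr_gt0.
apply: (z1_unbounded quarter_gt0); rewrite eq_sets.
by apply: mandelbrot_real; rewrite ltW // lexx.
Qed.
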